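(* Let $a>0$, $\epsilon>0$, and let $\Xi'\subseteq\Xi^+$ be a finite nonempty set. Put $\mathcal{A}'=\{\xi\in\Xi:\sum_{x\in\mathcal{X}}H_A(\mu,x)\xi(x)\ge a\ \forall\mu\in\Xi'\}$ and $\mathcal{A}=\{\xi\in\Xi^+:\phi_A(\xi)\ge a\}$. Let $(\xi',t')$ be an optimal solution of the linear program: maximize $t$ over $\xi\in\mathcal{A}'$, $t\in\mathbb{R}$, subject to $\sum_{x\in\mathcal{X}}H_D(\mu,x)\xi(x)\ge t$ for all $\mu\in\Xi'$. Then $\mathcal{A}\subseteq\mathcal{A}'$ and $\sup_{\xi\in\mathcal{A}}\phi_D(\xi)\le t'$. Consequently, if $\xi'\in\Xi^+$, $\phi_A(\xi')\ge a$ and $t'-\phi_D(\xi')<\epsilon$, then $\xi'\in\mathcal{A}$ and $\phi_D(\xi')>\sup_{\xi\in\mathcal{A}}\phi_D(\xi)-\epsilon$.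
   Context: $\mathcal{X}$ finite, $f:\mathcal{X}\to\mathbb{R}^p$, $\Xi$ the probability measures on $\mathcal{X}$, $M(\xi)=\sum_x f(x)f^\top(x)\xi(x)$, $\Xi^+=\{\mu\in\Xi: M(\mu)\text{ nonsingular}\}$. $\phi_D(\xi)=\det^{1/p}M(\xi)$ and $\phi_A(\xi)=1/\mathrm{tr}M^{-1}(\xi)$ for $\xi\in\Xi^+$. $H_D(\mu,x)=\frac{\det^{1/p}[M(\mu)]}{p}f^\top(x)M^{-1}(\mu)f(x)$ and $H_A(\mu,x)=\|M^{-1}(\mu)f(x)\|^2/[\mathrm{tr}M^{-1}(\mu)]^2$ for $\mu\in\Xi^+$. *)

From HB Require Import structures.
From mathcomp Require Import all_boot all_order all_algebra.
Set Implicit Arguments. Unset Strict Implicit. Unset Printing Implicit Defensive.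
Import Order.TTheory GRing.Theory Num.Theory.
Local Open Scope ring_scope.

Fact rootr_subproof (R : rcfType) (n : nat) (x : R) :
  exists2 y, 0 <= y & (if 0 <= x then y ^+ n.+1 == x else y == 0) : bool.
Proof.
case x_ge0: (0 <= x); last by exists 0.
have le0x1: 0 <= x + 1 by rewrite -nnegrE rpredD ?rpred1.
have [|y /andP[y_ge0 _]] := @poly_ivt _ (('X ^+ n.+1 : {poly R}) - x%:P) _ _ le0x1.
  rewrite !hornerE -subr_ge0 add0r expr0n /= sub0r opprK x_ge0 /=.
  rewrite subr_ge0 exprS.
  have h1 : 1 <= (x + 1) ^+ n by rewrite exprn_ege1 // lerDr.
  have : (x + 1) * 1 <= (x + 1) * (x + 1) ^+ n by rewrite ler_wpM2l.
  rewrite mulr1; apply: le_trans; by rewrite lerDl.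
by rewrite rootE !hornerE subr_eq0; exists y.
Qed.

(* rootr n x = the nonnegative n-th root of x, for n >= 1 and x >= 0
   (0 in the degenerate cases n = 0 or x < 0). *)
Definition rootr (R : rcfType) (n : nat) (x : R) : R :=
  if n is m.+1 then s2val (sig2W (@rootr_subproof R m x)) else 0.

Section Design.
Variables (R : rcfType) (p : nat) (X : finType) (f : X -> 'cV[R]_p).

Definition is_design (xi : {ffun X -> R}) : Prop :=
  (forall x, 0 <= xi x) /\ \sum_(x : X) xi x = 1.

Definition infoM (xi : {ffun X -> R}) : 'M[R]_p :=
  \sum_(x : X) xi x *: (f x *m (f x)^T).

Definition is_design_plus (xi : {ffun X -> R}) : Prop :=
  is_design xi /\ infoM xi \in unitmx.

Definition phiD (xi : {ffun X -> R}) : R := rootr p (\det (infoM xi)).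
Definition phiA (xi : {ffun X -> R}) : R := 1 / \tr (invmx (infoM xi)).

Definition sqnorm (v : 'cV[R]_p) : R := \sum_(i < p) v i 0 ^+ 2.

Definition HD (mu : {ffun X -> R}) (x : X) : R :=
  rootr p (\det (infoM mu)) / p%:R * ((f x)^T *m invmx (infoM mu) *m f x) 0 0.
Definition HA (mu : {ffun X -> R}) (x : X) : R :=
  sqnorm (invmx (infoM mu) *m f x) / (\tr (invmx (infoM mu))) ^+ 2.

(* A' (depends on the finite set Xi', given as a sequence S) *)
Definition in_Aprime (a : R) (S : seq {ffun X -> R}) (xi : {ffun X -> R}) : Prop :=
  is_design xi /\ forall mu, mu \in S -> \sum_(x : X) HA mu x * xi x >= a.

Definition in_A (a : R) (xi : {ffun X -> R}) : Prop :=
  is_design_plus xi /\ phiA xi >= a.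

Definition LP_feasible (a : R) (S : seq {ffun X -> R}) (xi : {ffun X -> R}) (t : R) : Prop :=
  in_Aprime a S xi /\ forall mu, mu \in S -> \sum_(x : X) HD mu x * xi x >= t.

Definition LP_optimal (a : R) (S : seq {ffun X -> R}) (xi : {ffun X -> R}) (t : R) : Prop :=
  LP_feasible a S xi t /\ forall xi2 t2, LP_feasible a S xi2 t2 -> t2 <= t.

End Design.

From HB Require Import structures.
From mathcomp Require Import all_boot all_order all_algebra.
From mathcomp Require Import ring lra.
Set Implicit Arguments. Unset Strict Implicit. Unset Printing Implicit Defensive.
Import Order.TTheory GRing.Theory Num.Theory.
Local Open Scope ring_scope.

(* For each mu in Xi', both criteria are bounded by their linearisations at mu.
   With P = M(mu)^-1 and Q = M(xi)^-1, the traces tr P = sum_x xi(x) <P f(x), Q f(x)>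
   and tr Q = sum_x xi(x) |Q f(x)|^2 are xi-weighted sums, so Cauchy-Schwarz gives
   (tr P)^2 <= tr Q * sum_x xi(x) |P f(x)|^2, i.e. sum_x H_A(mu,x) xi(x) >= phi_A(xi):
   hence A is contained in A'.  Writing M(mu) = K K^T, AM-GM on the pivots of an LDL^T
   factorisation of K^-1 M(xi) K^-T gives det M(xi) <= det M(mu) (tr (M(mu)^-1 M(xi)) / p)^p,
   i.e. phi_D(xi) <= sum_x H_D(mu,x) xi(x).  So every xi in A, paired with t = phi_D(xi),
   is feasible for the linear program, and optimality of t' bounds phi_D(xi). *)

Lemma rootr_ge0 (R : rcfType) n (x : R) : 0 <= rootr n x.
Proof. by case: n => [|m] //=; exact: (s2valP (sig2W (@rootr_subproof R m x))). Qed.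

Lemma rootrK (R : rcfType) n (x : R) : (0 < n)%N -> 0 <= x -> rootr n x ^+ n = x.
Proof.
case: n => // m _ x0; rewrite /rootr.
by case: (sig2W (@rootr_subproof R m x)) => y _ /=; rewrite x0 => /eqP.
Qed.

Section PsdMatrix.
Variable R : rcfType.
Implicit Types (n : nat) (c s : R).

Definition psdmx n (C : 'M[R]_n) : Prop :=
  C^T = C /\ forall v : 'cV[R]_n, 0 <= (v^T *m C *m v) 0 0.

Lemma qform_self_ge0 m n (v : 'M[R]_(m, n)) i : 0 <= (v^T *m v) i i.
Proof. by rewrite mxE; apply: sumr_ge0 => k _; rewrite mxE -expr2 sqr_ge0. Qed.

Lemma qform_self_eq0 n (v : 'cV[R]_n) : (v^T *m v) 0 0 = 0 -> v = 0.
Proof.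
move=> vv0; apply/matrixP => i j; rewrite ord1 mxE.
move: vv0; rewrite mxE => /eqP; rewrite psumr_eq0 => [/allP/(_ i)|k _].
  by rewrite mem_index_enum mxE -expr2 sqrf_eq0 => /(_ isT) /eqP.
by rewrite mxE -expr2 sqr_ge0.
Qed.

Lemma qform_block_col n c (b : 'cV[R]_n) (D : 'M[R]_n) s (w : 'cV[R]_n) :
  ((col_mx (s%:M : 'M_1) w)^T *m block_mx c%:M b^T b D *m col_mx s%:M w) 0 0
  = s ^+ 2 * c + (s * (b^T *m w) 0 0) *+ 2 + (w^T *m D *m w) 0 0.
Proof.
rewrite tr_col_mx tr_scalar_mx mul_row_block mul_row_col !mulmxDl.
rewrite !mul_scalar_mx !mul_mx_scalar !scalemxAl !mxE eqxx mulr1n.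
have sum_scale (u v : 'cV[R]_n) :
    \sum_j (s *: u^T) 0 j * v j 0 = s * \sum_j u^T 0 j * v j 0.
  by rewrite mulr_sumr; apply: eq_bigr => j _; rewrite !mxE mulrA.
have bw : \sum_j w^T 0 j * b j 0 = \sum_j b^T 0 j * w j 0.
  by apply: eq_bigr => j _; rewrite !mxE mulrC.
by rewrite !sum_scale bw mulr2n; ring.
Qed.

Section SchurComplement.
Variables (n : nat) (c : R) (b : 'cV[R]_n) (D : 'M[R]_n).
Hypothesis psdC : psdmx (block_mx c%:M b^T b D).

Let qform_ge0 s (w : 'cV[R]_n) :
  0 <= s ^+ 2 * c + (s * (b^T *m w) 0 0) *+ 2 + (w^T *m D *m w) 0 0.
Proof. by rewrite -qform_block_col; exact: psdC.2. Qed.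

Lemma psdmx_block_corner_ge0 : 0 <= c.
Proof.
by have := qform_ge0 1 0; rewrite mulmx0 trmx0 !mul0mx !mxE expr1n !mul1r mul0rn !addr0.
Qed.

(* When [c = 0] the form [2 s (b^T b) + b^T D b] is affine in [s], hence [b^T b = 0]. *)
Lemma psdmx_block_scale_col : c *: (c^-1 *: b) = b.
Proof.
have [c0|cn0] := eqVneq c 0; last by rewrite scalerA mulfV ?scale1r.
rewrite c0 scale0r; apply/esym/qform_self_eq0; set q := (b^T *m b) 0 0.
have q0 : 0 <= q := qform_self_ge0 b 0.
have := qform_ge0 (- ((b^T *m D *m b) 0 0 + 1) / (q *+ 2)) b.
rewrite c0 mulr0 add0r -/q; have [//|qn0] := eqVneq q 0.
rewrite -mulrnAr -mulrA mulVf ?mulr1 ?mulrn_eq0 //; lra.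
Qed.

Lemma psdmx_schur_complement : psdmx (D - c^-1 *: (b *m b^T)).
Proof.
have [Csym Cpsd] := psdC.
have Dsym : D^T = D by have := congr1 drsubmx Csym; rewrite tr_block_mx !block_mxKdr.
split; first by rewrite linearB /= linearZ /= trmx_mul trmxK Dsym.
pose K : 'M[R]_(1 + n, n) := col_mx (- (c^-1 *: b^T)) 1%:M.
have KCK : K^T *m block_mx c%:M b^T b D *m K = D - c^-1 *: (b *m b^T).
  rewrite tr_col_mx trmx1 linearN /= linearZ /= trmxK mul_row_block mul_row_col.
  rewrite !mul1mx mul_mx_scalar scalerN psdmx_block_scale_col addNr mul0mx add0r.
  by rewrite mulmx1 mulNmx -scalemxAl addrC.
move=> w; rewrite -KCK; have := Cpsd (K *m w).
by rewrite trmx_mul -!mulmxA.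
Qed.

End SchurComplement.

Lemma psdmx_LDL n (C : 'M[R]_n) : psdmx C ->
  exists (L : 'M[R]_n) (d : 'rV[R]_n),
    [/\ is_trig_mx L, forall i, L i i = 1, forall i, 0 <= d 0 i
      & C = L *m diag_mx d *m L^T].
Proof.
elim: n C => [|n IHn] C psdC.
  by exists 1%:M, 0; split; [apply/is_trig_mxP => -[] | case | case | apply/matrixP => -[]].
pose C' : 'M_(1 + n) := C.
pose c := C 0 0; pose b := dlsubmx C'; pose D := drsubmx C'.
have CE : C' = block_mx c%:M b^T b D.
  rewrite -{1}(submxK C') /b trmx_dlsub psdC.1; congr block_mx.
  by apply/matrixP => i j; rewrite !ord1 !mxE; congr (C _ _); apply: val_inj.
move: psdC; rewrite -[C]/C' CE => psdC.
have [L' [d' [L'trig L'1 d'0 SE]]] := IHn _ (psdmx_schur_complement psdC).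
pose L : 'M[R]_(1 + n) := block_mx 1%:M 0 (c^-1 *: b) L'.
pose d : 'rV[R]_(1 + n) := row_mx (c%:M : 'rV_1) d'.
have Ltrig : is_trig_mx L.
  by rewrite is_trig_block_mx // eqxx L'trig is_diag_mx_is_trig // mx11_is_diag.
have L1 i : L i i = 1.
  have [j ->|j ->] := split_ordP i; last by rewrite block_mxEdr L'1.
  by rewrite block_mxEul ord1 mxE.
have d0 i : 0 <= d 0 i.
  have [j ->|j ->] := split_ordP i; last by rewrite row_mxEr d'0.
  by rewrite row_mxEl ord1 mxE (psdmx_block_corner_ge0 psdC).
have diag_c : diag_mx (c%:M : 'rV_1) = c%:M by apply/matrixP => i j; rewrite !ord1 !mxE.
have LdL : block_mx c%:M b^T b D = L *m diag_mx d *m L^T.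
  rewrite /L /d diag_mx_row diag_c tr_block_mx trmx1 trmx0 !mulmx_block.
  rewrite !(mul1mx, mulmx1, mul0mx, mulmx0, addr0, add0r) mul_scalar_mx mul_mx_scalar.
  rewrite (psdmx_block_scale_col psdC) -linearZ /= (psdmx_block_scale_col psdC) -SE linearZ /=.
  by rewrite -scalemxAr addrC subrK.
by exists L, d.
Qed.

Lemma psdmx_diag_bound n (C : 'M[R]_n) : psdmx C ->
  exists d : 'rV[R]_n,
    [/\ forall i, 0 <= d 0 i, forall i, d 0 i <= C i i & \det C = \prod_i d 0 i].
Proof.
move=> /psdmx_LDL [L [d [Ltrig L1 d0 CE]]]; exists d; split=> // [i|].
  rewrite CE mul_mx_diag mxE (bigD1 i) //= !mxE L1 mulr1 mul1r lerDl.
  by apply: sumr_ge0 => k _; rewrite !mxE mulrAC mulr_ge0 // -expr2 sqr_ge0.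
by rewrite CE !det_mulmx det_tr det_diag det_trig // big1 ?mul1r ?mulr1.
Qed.

Lemma psdmx_det_ge0 n (C : 'M[R]_n) : psdmx C -> 0 <= \det C.
Proof. by case/psdmx_diag_bound => d [d0 _ ->]; apply: prodr_ge0. Qed.

Lemma psdmx_trace_ge0 n (C : 'M[R]_n) : psdmx C -> 0 <= \tr C.
Proof.
case/psdmx_diag_bound => d [d0 dC _].
by apply: sumr_ge0 => i _; apply: le_trans (dC i).
Qed.

(* AM-GM applied to the diagonal of an LDL^T factorization. *)
Lemma psdmx_det_le_trace n (C : 'M[R]_n) : (0 < n)%N -> psdmx C ->
  \det C <= (\tr C / n%:R) ^+ n.
Proof.
move=> n0 psdC; have [d [d0 dC ->]] := psdmx_diag_bound psdC.
have sum_d : \sum_i d 0 i <= \tr C by apply: ler_sum => i _; apply: dC.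
have := @leif_AGM R 'I_n predT (fun i => d 0 i) (fun i _ => d0 i).
rewrite card_ord => /leif_le /le_trans; apply; apply: lerXn2r.
- by rewrite nnegrE divr_ge0 // sumr_ge0.
- by rewrite nnegrE divr_ge0 // psdmx_trace_ge0.
- by rewrite ler_wpM2r ?invr_ge0.
Qed.

Lemma psdmx_trace_gt0 n (C : 'M[R]_n) : (0 < n)%N -> psdmx C -> C \in unitmx ->
  0 < \tr C.
Proof.
move=> n0 psdC; rewrite unitmxE unitfE lt_def psdmx_trace_ge0 // andbT.
apply: contra_neq => tr0; apply: le_anti; rewrite psdmx_det_ge0 //.
by have := psdmx_det_le_trace n0 psdC; rewrite tr0 mul0r expr0n gtn_eqF // andbT.
Qed.

Lemma psdmx_factor n (A : 'M[R]_n) : psdmx A -> exists K : 'M[R]_n, A = K *m K^T.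
Proof.
case/psdmx_LDL => L [d [_ _ d0 AE]]; exists (L *m diag_mx (\row_i Num.sqrt (d 0 i))).
rewrite AE trmx_mul tr_diag_mx !mulmxA -[_ *m diag_mx _ *m diag_mx _]mulmxA mulmx_diag.
by congr (_ *m diag_mx _ *m _); apply/rowP => i; rewrite !mxE -expr2 sqr_sqrtr.
Qed.

Lemma psdmx_congr m n (K : 'M[R]_(m, n)) (B : 'M[R]_n) : psdmx B -> psdmx (K *m B *m K^T).
Proof.
case=> Bsym Bpsd; split; first by rewrite !trmx_mul trmxK Bsym mulmxA.
by move=> v; have := Bpsd (K^T *m v); rewrite trmx_mul trmxK !mulmxA.
Qed.

Lemma psdmx_invmx n (A : 'M[R]_n) : psdmx A -> A \in unitmx -> psdmx (invmx A).
Proof.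
move=> psdA Au; have := psdmx_congr (invmx A) psdA.
by rewrite trmx_inv psdA.1 mulVmx // mul1mx.
Qed.

Lemma psdmx_det_le_trace_invmx n (A B : 'M[R]_n) :
    (0 < n)%N -> psdmx A -> psdmx B -> A \in unitmx ->
  rootr n (\det B) <= rootr n (\det A) / n%:R * \tr (invmx A *m B).
Proof.
move=> n0 psdA psdB Au; have [K AK] := psdmx_factor psdA.
have Ku : K \in unitmx by move: Au; rewrite AK unitmx_mul => /andP[].
have detK0 : \det K != 0 by rewrite -unitfE -unitmxE.
pose C := invmx K *m B *m (invmx K)^T.
have psdC : psdmx C := psdmx_congr (invmx K) psdB.
have invA : invmx A = (invmx K)^T *m invmx K.
  have AKK : A *m ((invmx K)^T *m invmx K) = 1%:M.
    by rewrite AK -mulmxA (mulmxA K^T) -trmx_mul mulVmx // trmx1 mul1mx mulmxV.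
  by rewrite -[LHS]mulmx1 -AKK mulKmx.
have trC : \tr (invmx A *m B) = \tr C.
  by rewrite invA -mulmxA mxtrace_mulC.
have detB : \det B = \det A * \det C.
  by rewrite AK /C !det_mulmx !det_tr det_inv; field.
rewrite trC -(ler_pXn2r n0) ?nnegrE ?rootr_ge0 //; last first.
  by rewrite mulr_ge0 ?divr_ge0 ?rootr_ge0 ?psdmx_trace_ge0.
rewrite mulrAC -mulrA exprMn !rootrK ?psdmx_det_ge0 // detB.
by rewrite ler_wpM2l ?psdmx_det_ge0 ?psdmx_det_le_trace.
Qed.

End PsdMatrix.

Section CauchySchwarz.
Variable R : rcfType.

Lemma weighted_cauchy_schwarz (I : finType) (w a b : I -> R) : (forall i, 0 <= w i) ->
  (\sum_i w i * a i * b i) ^+ 2 <= (\sum_i w i * a i ^+ 2) * (\sum_i w i * b i ^+ 2).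
Proof.
move=> w0.
have sum_prod (F G : I -> R) : \sum_i \sum_j F i * G j = (\sum_i F i) * (\sum_j G j).
  by rewrite mulr_suml; apply: eq_bigr => i _; rewrite mulr_sumr.
have sum_comb (F G H : I -> R) :
    \sum_i (F i + G i - 2 * H i) = \sum_i F i + \sum_i G i - 2 * \sum_i H i.
  by rewrite sumrB big_split /= mulr_sumr.
have : 0 <= \sum_i \sum_j w i * w j * (a i * b j - a j * b i) ^+ 2.
  by do 2![apply: sumr_ge0 => ? _]; rewrite mulr_ge0 ?sqr_ge0 ?mulr_ge0.
(* Lagrange's identity expands this double sum. *)
rewrite (eq_bigr (fun i => \sum_j ((w i * a i ^+ 2) * (w j * b j ^+ 2)
    + (w i * b i ^+ 2) * (w j * a j ^+ 2) - 2 * ((w i * a i * b i) * (w j * a j * b j)))));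
  last by move=> i _; apply: eq_bigr => j _; ring.
rewrite (eq_bigr _ (fun i _ => sum_comb _ _ _)) sum_comb !sum_prod.
set al := \sum_i _; set ga := \sum_i _; set be := \sum_i _.
rewrite (mulrC ga al) expr2; lra.
Qed.

Lemma sqnormE n (v : 'cV[R]_n) : sqnorm v = (v^T *m v) 0 0.
Proof. by rewrite mxE; apply: eq_bigr => i _; rewrite mxE expr2. Qed.

Lemma weighted_cauchy_schwarz_mx (I : finType) n (w : I -> R) (u v : I -> 'cV[R]_n) :
    (forall i, 0 <= w i) ->
  (\sum_i w i * ((u i)^T *m v i) 0 0) ^+ 2
    <= (\sum_i w i * sqnorm (u i)) * (\sum_i w i * sqnorm (v i)).
Proof.
move=> w0; have := weighted_cauchy_schwarz (fun j => u j.1 j.2 0)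
  (fun j => v j.1 j.2 0) (fun j : I * 'I_n => w0 j.1).
have sum_pair (F : I -> 'I_n -> R) :
    \sum_(j : I * 'I_n) w j.1 * F j.1 j.2 = \sum_i w i * \sum_k F i k.
  by rewrite -(pair_bigA _ (fun i k => w i * F i k)); apply: eq_bigr => i _; rewrite mulr_sumr.
under eq_bigr do rewrite -mulrA.
rewrite (sum_pair (fun i k => u i k 0 * v i k 0)).
rewrite (sum_pair (fun i k => u i k 0 ^+ 2)) (sum_pair (fun i k => v i k 0 ^+ 2)).
have uv i : ((u i)^T *m v i) 0 0 = \sum_k u i k 0 * v i k 0.
  by rewrite mxE; apply: eq_bigr => k _; rewrite mxE.
by move=> cs; under eq_bigr do rewrite uv.
Qed.
End CauchySchwarz.

Section Design.
Variables (R : rcfType) (p : nat) (X : finType) (f : X -> 'cV[R]_p).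
Implicit Types (xi mu : {ffun X -> R}) (P : 'M[R]_p).

Lemma tr_infoM xi : (infoM f xi)^T = infoM f xi.
Proof.
rewrite /infoM linear_sum; apply: eq_bigr => x _.
by rewrite linearZ /= trmx_mul trmxK.
Qed.

Lemma infoM_psd xi : (forall x, 0 <= xi x) -> psdmx (infoM f xi).
Proof.
move=> xi0; split=> [|v]; first exact: tr_infoM.
rewrite /infoM mulmx_sumr mulmx_suml summxE; apply: sumr_ge0 => x _.
rewrite -scalemxAr -scalemxAl mxE mulr_ge0 //.
have -> : v^T *m (f x *m (f x)^T) *m v = ((f x)^T *m v)^T *m ((f x)^T *m v).
  by rewrite trmx_mul trmxK !mulmxA.
exact: qform_self_ge0.
Qed.

Lemma mxtrace_mul_infoM P xi :
  \tr (P *m infoM f xi) = \sum_x xi x * ((f x)^T *m P *m f x) 0 0.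
Proof.
rewrite /infoM mulmx_sumr linear_sum /=; apply: eq_bigr => x _.
rewrite -scalemxAr mxtraceZ mulmxA mxtrace_mulC mulmxA.
by rewrite /mxtrace big_ord1.
Qed.

(* Writing [tr P = tr (P Q M(xi))] and [tr Q = tr (Q Q M(xi))] with [Q = M(xi)^-1]
   turns both traces into [xi]-weighted sums over the design points, to which
   Cauchy-Schwarz applies. *)
Lemma mxtrace_sqr_le_infoM P xi : (forall x, 0 <= xi x) -> infoM f xi \in unitmx ->
    P^T = P ->
  \tr P ^+ 2 <= \tr (invmx (infoM f xi)) * \sum_x xi x * sqnorm (P *m f x).
Proof.
move=> xi0 Mu Psym; set Q := invmx (infoM f xi).
have Qsym : Q^T = Q by rewrite /Q trmx_inv tr_infoM.
have trE A : \tr A = \sum_x xi x * ((A^T *m f x)^T *m (Q *m f x)) 0 0.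
  rewrite -[A in LHS]mulmx1 -(mulVmx Mu) mulmxA mxtrace_mul_infoM.
  by apply: eq_bigr => x _; rewrite trmx_mul trmxK !mulmxA.
rewrite [X in X ^+ 2]trE [\tr Q]trE Psym Qsym mulrC.
under [X in _ <= _ * X]eq_bigr do rewrite -sqnormE.
exact: weighted_cauchy_schwarz_mx.
Qed.

Lemma in_A_in_Aprime a S xi : (0 < p)%N -> 0 < a ->
    (forall mu, mu \in S -> is_design_plus f mu) ->
  in_A f a xi -> in_Aprime f a S xi.
Proof.
move=> p0 a0 Sok [[xid Mu] aA]; split=> // mu /Sok [[mu0 _] Mmu].
set P := invmx (infoM f mu).
have trP0 : 0 < \tr P.
  by apply: psdmx_trace_gt0; rewrite ?unitmx_inv //; apply/psdmx_invmx/Mmu/infoM_psd.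
have trQ0 : 0 < \tr (invmx (infoM f xi)).
  by have := lt_le_trans a0 aA; rewrite /phiA div1r invr_gt0.
have -> : \sum_x HA f mu x * xi x = (\sum_x xi x * sqnorm (P *m f x)) / \tr P ^+ 2.
  by rewrite /HA mulr_suml; apply: eq_bigr => x _; rewrite -/P; ring.
apply: le_trans aA _; rewrite /phiA ler_pdivlMr ?exprn_gt0 // div1r mulrC ler_pdivrMr //.
rewrite [X in _ <= X]mulrC mxtrace_sqr_le_infoM //.
  by case: xid.
by rewrite /P trmx_inv tr_infoM.
Qed.

Lemma HD_sum mu xi :
  \sum_x HD f mu x * xi x = phiD f mu / p%:R * \tr (invmx (infoM f mu) *m infoM f xi).
Proof.
by rewrite mxtrace_mul_infoM mulr_sumr; apply: eq_bigr => x _; rewrite /HD /phiD; ring.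
Qed.

Lemma phiD_le_HD_sum mu xi : (0 < p)%N -> is_design_plus f mu -> is_design xi ->
  phiD f xi <= \sum_x HD f mu x * xi x.
Proof.
move=> p0 [[mu0 _] Mmu] [xi0 _].
by rewrite HD_sum; apply: psdmx_det_le_trace_invmx => //; apply: infoM_psd.
Qed.

Lemma phiD_le_LP_value a S xi' t' xi : (0 < p)%N -> 0 < a ->
    (forall mu, mu \in S -> is_design_plus f mu) -> LP_optimal f a S xi' t' ->
  in_A f a xi -> phiD f xi <= t'.
Proof.
move=> p0 a0 Sok [_ opt] xiA; apply: (opt xi); split; first exact: in_A_in_Aprime.
by move=> mu /Sok muA; apply: phiD_le_HD_sum; last case: xiA => -[].
Qed.

End Design.

Theorem mainTheorem5 (R : rcfType) (p : nat) (X : finType) (f : X -> 'cV[R]_p)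
  (a eps : R) (S : seq {ffun X -> R}) (xi' : {ffun X -> R}) (t' : R) :
  (0 < p)%N -> 0 < a -> 0 < eps ->
  S != [::] -> (forall mu, mu \in S -> is_design_plus f mu) ->
  LP_optimal f a S xi' t' ->
  [/\ (forall xi, in_A f a xi -> in_Aprime f a S xi),
      (forall xi, in_A f a xi -> phiD f xi <= t')
    & (is_design_plus f xi' -> phiA f xi' >= a -> t' - phiD f xi' < eps ->
       in_A f a xi' /\
       exists s : R, (forall xi, in_A f a xi -> phiD f xi <= s) /\
                     s - eps < phiD f xi')].
Proof.
move=> p0 a0 _ _ Sok opt; split=> [xi|xi|xi'D xi'A gap].
- exact: in_A_in_Aprime.
- exact: phiD_le_LP_value opt.
- split=> //; exists t'; split; last by lra.
  by move=> xi; apply: phiD_le_LP_value opt.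
Qed.
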